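(* Fix a sequence $(d_n)_{n\ge 0}$ of non-zero complex numbers (the ''denominators''). Let $M=(M(n,k))_{n,k\ge 0}$ be an infinite lower triangular complex matrix with all diagonal entries equal to $1$ (a unipotent matrix), and suppose $M$ is the matrix of a substitution with prefunction, i.e. there exist formal power series $g(x),\phi(x)\in\mathbf{C}[[x]]$ with $\phi(0)=0$ such that for every $k\ge 0$ $$\sum_{n\ge 0} M(n,k)\frac{x^n}{d_n}=g(x)\frac{\phi(x)^k}{d_k}.$$ Write $M=I+N$ and, for $t\in\mathbf{C}$, define $M^t=\sum_{j\ge 0}\binom{t}{j}N^j$, where $\binom{t}{j}=\frac{t(t-1)\cdots(t-j+1)}{j!}$. Then for every $t\in\mathbf{C}$, $M^t$ is again the matrix of a substitution with prefunction, i.e. there exist formal power series $g_t,\phi_t\in\mathbf{C}[[x]]$ with $\phi_t(0)=0$ such that $\sum_{n\ge0}M^t(n,k)\frac{x^n}{d_n}=g_t(x)\frac{\phi_t(x)^k}{d_k}$ for all $k\ge 0$.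
   Context: Since $N=M-I$ is strictly lower triangular, each entry of $N^j$ in row $n$ vanishes for $j>n$, so each entry $M^t(n,k)$ is a finite sum (a polynomial in $t$); $M^t$ is lower triangular with ones on the diagonal and satisfies $M^{t_1+t_2}=M^{t_1}M^{t_2}$. The matrix $M$ acts on sequences $(a_k)$ by $b_n=\sum_k M(n,k)a_k$; through the denominators $(d_n)$ a sequence $(a_n)$ is identified with the series $\sum_n a_n x^n/d_n$, and a matrix of the stated form corresponds to the transformation $f(x)\mapsto g(x)f(\phi(x))$. *)

From mathcomp Require Import all_boot all_order all_algebra.
From mathcomp Require Import complex.
From mathcomp Require Import reals.
Set Implicit Arguments. Unset Strict Implicit. Unset Printing Implicit Defensive.
Import Order.TTheory GRing.Theory Num.Theory.
Local Open Scope ring_scope.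

Definition fps (K : Type) := nat -> K.

Definition fps_one (K : nzRingType) : fps K := fun n => if n == 0%N then 1 else 0.

Definition fps_mul (K : nzRingType) (f g : fps K) : fps K :=
  fun n => \sum_(i < n.+1) f i * g (n - i)%N.

Definition fps_pow (K : nzRingType) (f : fps K) (k : nat) : fps K :=
  iter k (fps_mul f) (fps_one K).

Definition imat (K : Type) := nat -> nat -> K.

Definition lower_unipotent (K : nzRingType) (M : imat K) : Prop :=
  (forall n k, (n < k)%N -> M n k = 0) /\ (forall n, M n n = 1).

Definition imat_id (K : nzRingType) : imat K := fun n k => if n == k then 1 else 0.

(* Product of infinite matrices, for a lower triangular left factor:
   (A B)(n,k) = sum_{i} A(n,i) B(i,k), where only i <= n contribute. *)
Definition imat_mul (K : nzRingType) (A B : imat K) : imat K :=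
  fun n k => \sum_(i < n.+1) A n i * B i k.

Definition imat_pow (K : nzRingType) (A : imat K) (j : nat) : imat K :=
  iter j (imat_mul A) (imat_id K).

Definition gbinom (K : fieldType) (t : K) (j : nat) : K :=
  (\prod_(i < j) (t - i%:R)) / (j`!)%:R.

(* M^t = sum_{j>=0} binom(t,j) N^j with N = M - I; in row n only j <= n
   can contribute since N is strictly lower triangular. *)
Definition imat_tpow (K : fieldType) (M : imat K) (t : K) : imat K :=
  fun n k => \sum_(j < n.+1) gbinom t j * imat_pow (fun a b => M a b - imat_id K a b) j n k.

Definition subst_prefun (K : fieldType) (d : nat -> K) (M : imat K)
  (g phi : fps K) : Prop :=
  phi 0%N = 0 /\
  forall k n, M n k / d n = fps_mul g (fps_pow phi k) n / d k.

From mathcomp Require Import all_boot all_order all_algebra.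
From mathcomp Require Import complex reals ring zify.
(* Conjugating by diag(d) reduces to d = 1, where a unipotent A is a substitution
   matrix iff each column is the previous one convolved with a fixed series phi.
   On an N x N truncation, with X the shift matrix, this reads A X = T A with T
   commuting with X, i.e. T lower triangular Toeplitz with first column phi.
   For A = M^m this holds for every natural m, T being a polynomial in X.  As
   det M^t = 1, necessarily T = M^t X adj(M^t), and the entries of [T, X] are
   polynomials in t vanishing on the naturals, hence identically zero.  The
   first column of T does not depend on N: it is the quotient of the first two
   columns of M^t, and the first column has constant term 1. *)

Set Implicit Arguments. Unset Strict Implicit. Unset Printing Implicit Defensive.
Import Order.TTheory GRing.Theory Num.Theory.
Local Open Scope ring_scope.

Lemma big_ord_widen0 (V : nmodType) (a b : nat) (F : nat -> V) :
  (a <= b)%N -> (forall j, (a <= j)%N -> F j = 0) ->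
  \sum_(j < a) F j = \sum_(j < b) F j.
Proof.
move=> hab hF; rewrite (big_ord_widen b F hab) big_mkcond /=.
by apply: eq_bigr => j _; case: ltnP => // /hF.
Qed.

Lemma poly_natr_eq0 (K : numDomainType) (p : {poly K}) :
  (forall m : nat, p.[m%:R] = 0) -> p = 0.
Proof.
move=> hp; apply: (@roots_geq_poly_eq0 _ p [seq m%:R | m <- iota 0 (size p)]).
- by apply/allP => x /mapP [m _ ->]; apply/rootP.
- by rewrite map_inj_uniq ?iota_uniq //; apply: mulrIn; rewrite oner_neq0.
- by rewrite size_map size_iota.
Qed.

Section FormalPowerSeries.
Variable K : comNzRingType.
Implicit Types (c f g h : fps K).

Lemma fps_mulEr f g n : fps_mul f g n = \sum_(i < n.+1) f (n - i)%N * g i.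
Proof.
rewrite /fps_mul (reindex_inj rev_ord_inj) /=; apply: eq_bigr => i _.
by rewrite subSS subKn // -ltnS.
Qed.

Lemma fps_mulr1 g n : fps_mul g (fps_one K) n = g n.
Proof.
rewrite /fps_mul big_ord_recr /= subnn /fps_one eqxx mulr1 big1 ?add0r //.
by move=> i _; rewrite subn_eq0 leqNgt ltn_ord mulr0.
Qed.

Lemma coef_fps_mul_trunc f g n N : (n < N)%N ->
  fps_mul f g n = (\poly_(i < N) f i * \poly_(i < N) g i)`_n.
Proof.
move=> hn; rewrite coefM /fps_mul; apply: eq_bigr => i _.
have hi : (i < N)%N by apply: leq_ltn_trans hn; rewrite -ltnS.
have hni : (n - i < N)%N by apply: leq_ltn_trans hn; apply: leq_subr.
by rewrite !coef_poly hi hni.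
Qed.

Lemma fps_mulCA f g h n :
  fps_mul f (fps_mul g h) n = fps_mul g (fps_mul f h) n.
Proof.
pose T u : {poly K} := \poly_(i < n.+1) u i.
have E u v w : fps_mul u (fps_mul v w) n = (T u * (T v * T w))`_n.
  rewrite coefM {1}/fps_mul; apply: eq_bigr => i _.
  rewrite (@coef_fps_mul_trunc v w (n - i) n.+1) ?ltnS ?leq_subr //.
  by rewrite coef_poly ltn_ord.
by rewrite !E mulrCA.
Qed.

Lemma fps_mul_cancel_coef c f g m : c 0%N = 1 ->
  (forall i, (i <= m)%N -> fps_mul f c i = fps_mul g c i) -> f m = g m.
Proof.
move=> c0 hfg; elim/ltn_ind: m hfg => m IH hfg.
have := hfg m (leqnn m); rewrite /fps_mul !big_ord_recr /= subnn c0 !mulr1.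
have -> : \sum_(i < m) f i * c (m - i)%N = \sum_(i < m) g i * c (m - i)%N.
  apply: eq_bigr => i _; rewrite (IH i) // => j hj.
  by apply: hfg; apply: leq_trans hj (ltnW (ltn_ord i)).
exact: addrI.
Qed.

End FormalPowerSeries.

Definition column_recursive (K : nzRingType) (A : imat K) (phi : fps K) :=
  forall i j, A i j.+1 = fps_mul phi (A^~ j) i.

Section SubstitutionColumns.
Variable K : fieldType.
Implicit Types (A : imat K) (g phi : fps K).

Lemma subst_prefun1_column_recursive A g phi :
  subst_prefun (fun _ => 1) A g phi -> column_recursive A phi.
Proof.
move=> [_ hA] i j.
have E k n : A n k = fps_mul g (fps_pow phi k) n by have := hA k n; rewrite !divr1.
by rewrite E /= fps_mulCA; apply: eq_bigr => l _; rewrite E.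
Qed.

Lemma column_recursive_subst_prefun1 A phi : phi 0%N = 0 ->
  column_recursive A phi -> subst_prefun (fun _ => 1) A (A^~ 0%N) phi.
Proof.
move=> phi0 hA; split=> // k n; rewrite !divr1.
elim: k n => [|k IH] n; first by rewrite /= fps_mulr1.
by rewrite hA /= fps_mulCA; apply: eq_bigr => l _; rewrite IH.
Qed.

Lemma eq_subst_prefun (d : nat -> K) A B g phi : (forall n k, A n k = B n k) ->
  subst_prefun d A g phi -> subst_prefun d B g phi.
Proof. by move=> eAB [phi0 hA]; split=> // k n; rewrite -eAB. Qed.

End SubstitutionColumns.

Definition imat_sub1 (K : nzRingType) (A : imat K) : imat K :=
  fun a b => A a b - imat_id K a b.

Definition lower_triangular (K : nzRingType) (A : imat K) :=
  forall i k, (i < k)%N -> A i k = 0.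

Definition strictly_lower_triangular (K : nzRingType) (A : imat K) :=
  forall i k, (i <= k)%N -> A i k = 0.

Section ImatPowers.
Variable K : nzRingType.
Implicit Types A B : imat K.

Lemma eq_imat_pow A B : (forall a b, A a b = B a b) ->
  forall j n k, imat_pow A j n k = imat_pow B j n k.
Proof.
move=> eAB; elim=> [|j IH] n k //=.
by apply: eq_bigr => i _; rewrite eAB IH.
Qed.

Lemma imat_pow_strictly_lower B : strictly_lower_triangular B ->
  forall j i k, (i < k + j)%N -> imat_pow B j i k = 0.
Proof.
move=> hB; elim=> [|j IH] i k hi.
  by rewrite /= /imat_id; case: eqP => // e; move: hi; rewrite e addn0 ltnn.
rewrite /= /imat_mul big1 // => l _.
case: (leqP i l) => hl; first by rewrite hB // mul0r.
by rewrite IH ?mulr0 //; apply: leq_trans hl _; rewrite -ltnS -addnS.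
Qed.

Lemma imat_sub1_strictly_lower A : lower_unipotent A ->
  strictly_lower_triangular (imat_sub1 A).
Proof.
move=> [hl hd] i k; rewrite leq_eqVlt => /orP[/eqP->|h].
  by rewrite /imat_sub1 hd /imat_id eqxx subrr.
by rewrite /imat_sub1 hl // /imat_id (ltn_eqF h) subrr.
Qed.

End ImatPowers.

Section GeneralizedBinomial.
Variable K : fieldType.

Lemma gbinom0 (t : K) : gbinom t 0 = 1.
Proof. by rewrite /gbinom big_ord0 fact0 divr1. Qed.

Definition gbinom_poly (j : nat) : {poly K} :=
  \prod_(i < j) ('X - (i%:R)%:P) * ((j`!)%:R^-1)%:P.

Lemma horner_gbinom_poly j (t : K) : (gbinom_poly j).[t] = gbinom t j.
Proof.
rewrite hornerM hornerC horner_prod /gbinom; congr (_ / _).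
by apply: eq_bigr => l _; rewrite hornerXsubC.
Qed.

End GeneralizedBinomial.

Lemma gbinomS (K : numFieldType) (t : K) j :
  gbinom (t + 1) j.+1 = gbinom t j.+1 + gbinom t j.
Proof.
rewrite /gbinom big_ord_recl big_ord_recr /=.
have -> : \prod_(i < j) (t + 1 - (bump 0 i)%:R) = \prod_(i < j) (t - i%:R).
  by apply: eq_bigr => i _; rewrite /bump /= mulrSr; ring.
rewrite factS natrM; field.
by rewrite pnatr_eq0 -lt0n fact_gt0 -mulrS pnatr_eq0.
Qed.

Lemma gbinom_nat (K : numFieldType) (m j : nat) : gbinom (m%:R : K) j = 'C(m, j)%:R.
Proof.
elim: m j => [|m IH] [|j]; rewrite ?gbinom0 ?bin0 //.
  by rewrite /gbinom big_ord_recl subrr !mul0r bin0n.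
by rewrite mulrSr gbinomS !IH binS natrD.
Qed.

Section ImatRealPowers.
Variable K : fieldType.
Implicit Types M : imat K.

Lemma imat_tpowE M t n k :
  imat_tpow M t n k = \sum_(j < n.+1) gbinom t j * imat_pow (imat_sub1 M) j n k.
Proof. by []. Qed.

Lemma imat_tpow_upper M t n k : lower_unipotent M -> (n <= k)%N ->
  imat_tpow M t n k = imat_id K n k.
Proof.
move=> hM hnk; rewrite imat_tpowE big_ord_recl gbinom0 mul1r big1 ?addr0 //.
move=> j _; rewrite imat_pow_strictly_lower ?mulr0 //.
  exact: imat_sub1_strictly_lower.
by rewrite addnS ltnS (leq_trans hnk) ?leq_addr.
Qed.

Lemma lower_unipotent_tpow M t : lower_unipotent M -> lower_unipotent (imat_tpow M t).
Proof.
move=> hM; split=> [n k h|n]; rewrite imat_tpow_upper ?(ltnW h) // /imat_id.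
  by rewrite (ltn_eqF h).
by rewrite eqxx.
Qed.

End ImatRealPowers.

Section Rescaling.
Variables (K : fieldType) (d : nat -> K).
Hypothesis d_neq0 : forall n, d n != 0.
Implicit Types (A M : imat K) (g phi : fps K).

Definition imat_rescale A : imat K := fun n k => A n k * d k / d n.

Lemma lower_unipotent_rescale M : lower_unipotent M -> lower_unipotent (imat_rescale M).
Proof.
move=> [hl hd]; split=> [n k h|n]; rewrite /imat_rescale.
  by rewrite hl // !mul0r.
by rewrite hd mul1r divff.
Qed.

Lemma subst_prefun_rescale A g phi :
  subst_prefun d A g phi <-> subst_prefun (fun _ => 1) (imat_rescale A) g phi.
Proof.
split=> -[phi0 hA]; split=> // k n; have := hA k n; rewrite /imat_rescale !divr1.
  by rewrite mulrAC => ->; rewrite divfK.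
by move <-; field; rewrite !d_neq0.
Qed.

Lemma imat_pow_rescale A j n k :
  imat_pow (imat_rescale A) j n k = imat_rescale (imat_pow A j) n k.
Proof.
elim: j n k => [|j IH] n k /=.
  rewrite /imat_rescale /imat_id; case: eqP => [->|_]; last by rewrite !mul0r.
  by rewrite mul1r divff.
rewrite /imat_mul /imat_rescale !mulr_suml; apply: eq_bigr => i _.
by rewrite IH /imat_rescale; field; rewrite !d_neq0.
Qed.

Lemma imat_tpow_rescale M t n k :
  imat_tpow (imat_rescale M) t n k = imat_rescale (imat_tpow M t) n k.
Proof.
have sub1_rescale a b : imat_sub1 (imat_rescale M) a b = imat_rescale (imat_sub1 M) a b.
  rewrite /imat_sub1 /imat_rescale /imat_id; case: eqP => [->|_]; last by rewrite !subr0.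
  by field; rewrite d_neq0.
rewrite !imat_tpowE /imat_rescale !mulr_suml; apply: eq_bigr => j _.
by rewrite (eq_imat_pow sub1_rescale) imat_pow_rescale /imat_rescale !mulrA.
Qed.

End Rescaling.

Section Truncation.
Variables (K : comNzRingType) (N' : nat).
Local Notation N := N'.+1.
Implicit Types (A B : imat K) (phi : fps K) (T : 'M[K]_N).

Definition truncmx A : 'M[K]_N := \matrix_(i, j) A i j.

(* Out-of-range indices are read as 0 by [inord]. *)
Definition imat_of_mx T : imat K := fun i j => T (inord i) (inord j).

Definition shiftmx : 'M[K]_N := \matrix_(i, j) ((i : nat) == j.+1)%:R.

Definition toeplitzmx phi : 'M[K]_N := \sum_(l < N) phi l *: shiftmx ^+ l.

Lemma truncmx_of_mx T : truncmx (imat_of_mx T) = T.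
Proof. by apply/matrixP => i j; rewrite mxE /imat_of_mx !inord_val. Qed.

Lemma truncmx_id : truncmx (imat_id K) = 1%:M.
Proof. by apply/matrixP => i j; rewrite !mxE /imat_id -val_eqE /=; case: (_ == _). Qed.

Lemma truncmx_mul A B : lower_triangular A ->
  truncmx (imat_mul A B) = truncmx A *m truncmx B.
Proof.
move=> hA; apply/matrixP => i k; rewrite !mxE /imat_mul.
rewrite (big_ord_widen N (fun l => A i l * B l k) (ltn_ord i)) big_mkcond /=.
apply: eq_bigr => l _; rewrite !mxE; case: ltnP => // h.
by rewrite hA ?mul0r.
Qed.

Lemma truncmx_pow A j : lower_triangular A ->
  truncmx (imat_pow A j) = truncmx A ^+ j.
Proof.
move=> hA; elim: j => [|j IH]; first by rewrite expr0 /= truncmx_id.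
by rewrite exprS /= truncmx_mul // IH mulmxE.
Qed.

Lemma det_truncmx_unipotent A : lower_unipotent A -> \det (truncmx A) = 1.
Proof.
move=> [hl hd]; rewrite det_trig; last by apply/is_trig_mxP => i j h; rewrite mxE hl.
by rewrite big1 // => i _; rewrite mxE hd.
Qed.

Lemma truncmx_mul_shift A :
  truncmx A *m shiftmx = \matrix_(i, j) (if (j.+1 < N)%N then A i j.+1 else 0).
Proof.
apply/matrixP => i j; rewrite !mxE; case: ifP => h.
  rewrite (bigD1 (Ordinal h)) //= big1 ?addr0; first by rewrite !mxE eqxx mulr1.
  move=> a ha; rewrite !mxE; case: eqP => e; last by rewrite mulr0.
  by move: ha; rewrite -val_eqE /= e eqxx.
rewrite big1 // => a _; rewrite !mxE; case: eqP => e; last by rewrite mulr0.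
by move: (ltn_ord a); rewrite e h.
Qed.

Lemma shift_mul_truncmx A :
  shiftmx *m truncmx A = \matrix_(i, j) (if (i : nat) is i'.+1 then A i' j else 0).
Proof.
apply/matrixP => -[[|i] hi] j; rewrite !mxE /=.
  by rewrite big1 // => a _; rewrite !mxE mul0r.
rewrite (bigD1 (Ordinal (ltnW hi))) //= big1 ?addr0; first by rewrite !mxE eqxx mul1r.
move=> a ha; rewrite !mxE; case: eqP => e; last by rewrite mul0r.
by move: ha; rewrite -val_eqE /=; case: e => ->; rewrite eqxx.
Qed.

Lemma shiftmx_exp l : shiftmx ^+ l = \matrix_(i, j) ((i : nat) == (j + l)%N)%:R.
Proof.
elim: l => [|l IH]; first by apply/matrixP => i j; rewrite !mxE addn0 -val_eqE.
rewrite exprSr IH -mulmxE -[X in X *m _]truncmx_of_mx truncmx_mul_shift.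
apply/matrixP => i j; rewrite !mxE; case: ltnP => h.
  by rewrite /imat_of_mx mxE (inordK (ltn_ord i)) (inordK h) addSnnS.
case: eqP => // e; move: (ltn_ord i); rewrite e.
by rewrite -addSnnS ltnNge (leq_trans h (leq_addr _ _)).
Qed.

Lemma toeplitzmxE phi :
  toeplitzmx phi = \matrix_(i, j) (if (j <= i)%N then phi (i - j)%N else 0).
Proof.
apply/matrixP => i j; rewrite /toeplitzmx summxE !mxE.
under eq_bigr => l _ do rewrite shiftmx_exp !mxE.
case: ifP => h.
  have hl : (i - j < N)%N by apply: leq_ltn_trans (ltn_ord i); apply: leq_subr.
  rewrite (bigD1 (Ordinal hl)) //= big1 ?addr0; first by rewrite subnKC // eqxx mulr1.
  move=> l hl'; case: eqP => e; last by rewrite mulr0.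
  by move: hl'; rewrite -val_eqE /= e addKn eqxx.
rewrite big1 // => l _; case: eqP => e; last by rewrite mulr0.
by move: h; rewrite e leq_addr.
Qed.

Lemma toeplitzmx_mulE phi A (i j : 'I_N) :
  (toeplitzmx phi *m truncmx A) i j = fps_mul phi (A^~ j) i.
Proof.
rewrite toeplitzmxE fps_mulEr !mxE.
under eq_bigr => a _ do rewrite !mxE.
rewrite -(@big_ord_widen0 _ i.+1 N (fun a => (if (a <= i)%N then phi (i - a)%N else 0) * A a j)) //.
- by apply: eq_bigr => a _; rewrite -ltnS ltn_ord.
- by move=> a ha; rewrite leqNgt ha mul0r.
Qed.

Lemma toeplitzmx_commute T : T *m shiftmx = shiftmx *m T ->
  T = toeplitzmx (fun l => imat_of_mx T l 0%N).
Proof.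
move=> comm_T; set A := imat_of_mx T.
have E : truncmx A *m shiftmx = shiftmx *m truncmx A by rewrite truncmx_of_mx.
rewrite truncmx_mul_shift shift_mul_truncmx in E.
have A_toeplitz j i : (i < N)%N -> (j < N)%N ->
    A i j = if (j <= i)%N then A (i - j)%N 0%N else 0.
  elim: j i => [|j IH] i hi hj; first by rewrite subn0.
  have := congr1 (fun B : 'M[K]_N => B (Ordinal hi) (Ordinal (ltnW hj))) E.
  rewrite !mxE /= hj; case: i hi => [|i] hi -> //.
  by rewrite IH ?subSS // ltnW.
apply/matrixP => i j; rewrite toeplitzmxE mxE -A_toeplitz //.
by rewrite /A /imat_of_mx !inord_val.
Qed.

End Truncation.

Section TruncatedPowers.
Variables (K : numFieldType) (M : imat K) (phi : fps K).
Hypotheses (hM : lower_unipotent M) (hcol : column_recursive M phi).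
Variable N' : nat.
Local Notation N := N'.+1.
Local Notation truncmx := (@truncmx K N').
Local Notation shiftmx := (@shiftmx K N').
Local Notation toeplitzmx := (@toeplitzmx K N').

Lemma lower_triangular_sub1 : lower_triangular (imat_sub1 M).
Proof. by move=> i k /ltnW; apply: imat_sub1_strictly_lower. Qed.

Lemma truncmx_tpow t :
  truncmx (imat_tpow M t) = \sum_(j < N) gbinom t j *: truncmx (imat_sub1 M) ^+ j.
Proof.
apply/matrixP => i k; rewrite summxE !mxE imat_tpowE.
rewrite (@big_ord_widen0 _ i.+1 N (fun j => gbinom t j * imat_pow (imat_sub1 M) j i k)) //.
  by apply: eq_bigr => j _; rewrite -truncmx_pow ?mxE //; apply: lower_triangular_sub1.
move=> j hj; rewrite imat_pow_strictly_lower ?mulr0 //.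
  exact: imat_sub1_strictly_lower.
exact: leq_trans hj (leq_addl _ _).
Qed.

Lemma truncmx_sub1_nilpotent j : (N <= j)%N -> truncmx (imat_sub1 M) ^+ j = 0.
Proof.
move=> hj; rewrite -truncmx_pow; last exact: lower_triangular_sub1.
apply/matrixP => i k; rewrite !mxE imat_pow_strictly_lower //.
  exact: imat_sub1_strictly_lower.
by apply: leq_trans (ltn_ord i) _; apply: leq_trans hj (leq_addl _ _).
Qed.

Lemma truncmx_tpow_nat m : truncmx (imat_tpow M m%:R) = truncmx M ^+ m.
Proof.
have -> : truncmx M = truncmx (imat_sub1 M) + 1.
  apply/matrixP => i k; rewrite !mxE /imat_sub1 /imat_id -val_eqE /=.
  by case: (_ == _); rewrite subrK.
rewrite truncmx_tpow exprD1n.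
under eq_bigr => j _ do rewrite gbinom_nat scaler_nat.
pose F j := truncmx (imat_sub1 M) ^+ j *+ 'C(m, j).
rewrite (@big_ord_widen0 _ N (N + m.+1) F (leq_addr _ _)); last first.
  by move=> j hj; rewrite /F truncmx_sub1_nilpotent // mul0rn.
rewrite [RHS](@big_ord_widen0 _ m.+1 (N + m.+1) F (leq_addl _ _)) //.
by move=> j hj; rewrite /F bin_small.
Qed.

Lemma truncmx_mul_shift_toeplitz : truncmx M *m shiftmx = toeplitzmx phi *m truncmx M.
Proof.
apply/matrixP => i j; rewrite truncmx_mul_shift toeplitzmx_mulE -hcol mxE.
case: ltnP => // h; rewrite hM.1 //; exact: leq_trans (ltn_ord i) h.
Qed.

(* Since truncmx M * X = phi(X) * truncmx M, an intertwiner Psi for M^m gives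
   the intertwiner phi(Psi) for M^(m+1). *)
Lemma exists_shift_intertwiner m : exists2 Psi : 'M[K]_N,
  Psi *m shiftmx = shiftmx *m Psi & truncmx M ^+ m *m shiftmx = Psi *m truncmx M ^+ m.
Proof.
elim: m => [|m [Psi comm_Psi hPsi]].
  by exists shiftmx => //; rewrite expr0 mul1mx mulmx1.
set B := truncmx M ^+ m.
have B_shift_exp l : B *m shiftmx ^+ l = Psi ^+ l *m B.
  elim: l => [|l IH]; first by rewrite !expr0 mul1mx mulmx1.
  by rewrite !exprSr -!mulmxE mulmxA IH -mulmxA hPsi mulmxA.
have comm_Psi_exp l : Psi ^+ l *m shiftmx = shiftmx *m Psi ^+ l.
  elim: l => [|l IH]; first by rewrite !expr0 mul1mx mulmx1.
  by rewrite exprSr -!mulmxE -mulmxA comm_Psi !mulmxA IH.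
exists (\sum_(l < N) phi l *: Psi ^+ l).
  rewrite mulmx_suml mulmx_sumr; apply: eq_bigr => l _.
  by rewrite -scalemxAl -scalemxAr comm_Psi_exp.
rewrite exprSr -mulmxE -mulmxA truncmx_mul_shift_toeplitz mulmxA [RHS]mulmxA.
congr (_ *m _); rewrite /toeplitzmx mulmx_sumr mulmx_suml; apply: eq_bigr => l _.
by rewrite -scalemxAr -scalemxAl B_shift_exp.
Qed.

Lemma det_truncmx_tpow t : \det (truncmx (imat_tpow M t)) = 1.
Proof. by apply: det_truncmx_unipotent; apply: lower_unipotent_tpow. Qed.

Definition tpow_polymx : 'M[{poly K}]_N :=
  \sum_(j < N) gbinom_poly K j *: map_mx polyC (truncmx (imat_sub1 M) ^+ j).

Lemma horner_tpow_polymx t : map_mx (horner_eval t) tpow_polymx = truncmx (imat_tpow M t).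
Proof.
rewrite truncmx_tpow; apply/matrixP => i k.
rewrite !mxE summxE horner_evalE horner_sum summxE.
by apply: eq_bigr => j _; rewrite !mxE hornerM hornerC horner_gbinom_poly.
Qed.

(* det = 1, so the adjugate is the inverse. *)
Definition tpow_shift_conj t : 'M[K]_N :=
  truncmx (imat_tpow M t) *m shiftmx *m \adj (truncmx (imat_tpow M t)).

Lemma tpow_shift_conj_commute t :
  tpow_shift_conj t *m shiftmx = shiftmx *m tpow_shift_conj t.
Proof.
pose P := tpow_polymx; pose X := map_mx polyC shiftmx.
pose C := P *m X *m \adj P.
have eval_X s : map_mx (horner_eval s) X = shiftmx.
  by apply/matrixP => i k; rewrite !mxE horner_evalE hornerC.
have eval_comm s : map_mx (horner_eval s) (C *m X - X *m C) =
    tpow_shift_conj s *m shiftmx - shiftmx *m tpow_shift_conj s.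
  by rewrite map_mxB !map_mxM map_mx_adj horner_tpow_polymx eval_X.
have comm_nat m : tpow_shift_conj m%:R *m shiftmx = shiftmx *m tpow_shift_conj m%:R.
  have [Psi comm_Psi hPsi] := exists_shift_intertwiner m.
  have det1 : \det (truncmx M ^+ m) = 1.
    by rewrite -truncmx_tpow_nat det_truncmx_tpow.
  by rewrite /tpow_shift_conj truncmx_tpow_nat hPsi -(mulmxA Psi) mul_mx_adj det1 mulmx1.
have comm0 : C *m X - X *m C = 0.
  apply/matrixP => i k; rewrite [RHS]mxE; apply: poly_natr_eq0 => m.
  have := congr1 (fun B : 'M[K]_N => B i k) (eval_comm m%:R).
  by rewrite mxE horner_evalE => ->; rewrite comm_nat subrr mxE.
by apply/eqP; rewrite -subr_eq0 -eval_comm comm0 map_mx0.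
Qed.

Definition tpow_series t : fps K := fun l => imat_of_mx (tpow_shift_conj t) l 0%N.

Lemma truncmx_tpow_mul_shift t :
  truncmx (imat_tpow M t) *m shiftmx = toeplitzmx (tpow_series t) *m truncmx (imat_tpow M t).
Proof.
rewrite /tpow_series -toeplitzmx_commute ?tpow_shift_conj_commute //.
by rewrite /tpow_shift_conj -mulmxA mul_adj_mx det_truncmx_tpow mulmx1.
Qed.

Lemma tpow_column_recursive_trunc t i j : (i < N)%N -> (j.+1 < N)%N ->
  imat_tpow M t i j.+1 = fps_mul (tpow_series t) ((imat_tpow M t)^~ j) i.
Proof.
move=> hi hj.
have := congr1 (fun B : 'M[K]_N => B (Ordinal hi) (Ordinal (ltnW hj))) (truncmx_tpow_mul_shift t).
by rewrite /= truncmx_mul_shift toeplitzmx_mulE mxE /= hj.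
Qed.

End TruncatedPowers.

Section RealPowerSubstitution.
Variables (K : numFieldType) (M : imat K) (phi : fps K).
Hypotheses (hM : lower_unipotent M) (hcol : column_recursive M phi).
Variable t : K.

(* Size m + 2 is the smallest truncation containing rows 0..m of columns 0
   and 1, which determine the m-th coefficient. *)
Definition tpow_prefun : fps K := fun m => tpow_series M m.+1 t m.

Lemma tpow_series_consistent N' m : (m < N')%N -> tpow_series M N' t m = tpow_prefun m.
Proof.
move=> hm; rewrite /tpow_prefun.
apply: (@fps_mul_cancel_coef _ ((imat_tpow M t)^~ 0%N)).
  by rewrite (lower_unipotent_tpow t hM).2.
move=> i hi; rewrite -!(tpow_column_recursive_trunc hM hcol) //; lia.
Qed.

Lemma column_recursive_tpow : column_recursive (imat_tpow M t) tpow_prefun.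
Proof.
move=> i j; rewrite (tpow_column_recursive_trunc hM hcol (N' := (i + j).+1)); last 2 first.
- by rewrite ltnS leqW // leq_addr.
- by rewrite !ltnS leq_addl.
apply: eq_bigr => l _; rewrite tpow_series_consistent //.
by rewrite ltnS (leq_trans _ (leq_addr _ _)) // -ltnS.
Qed.

Lemma tpow_prefun0 : tpow_prefun 0%N = 0.
Proof.
have [hl hd] := lower_unipotent_tpow t hM.
have := column_recursive_tpow 0 0; rewrite /fps_mul big_ord1 subn0 hd mulr1 => <-.
exact: hl.
Qed.

End RealPowerSubstitution.

Unset Implicit Arguments.

Theorem mainTheorem1 (R : realType) (d : nat -> R[i]) (M : imat R[i]) :
  (forall n, d n != 0) ->
  lower_unipotent M ->
  (exists g phi : fps R[i], subst_prefun d M g phi) ->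
  forall t : R[i], exists gt phit : fps R[i], subst_prefun d (imat_tpow M t) gt phit.
Proof.
move=> d_neq0 hM [g [phi hMs]] t.
set Md := imat_rescale d M.
have hMd : lower_unipotent Md by apply: lower_unipotent_rescale.
have hcol : column_recursive Md phi.
  by apply: (@subst_prefun1_column_recursive _ Md g); apply/(subst_prefun_rescale d_neq0).
exists ((imat_tpow Md t)^~ 0%N), (tpow_prefun Md t).
apply/(subst_prefun_rescale d_neq0).
apply: (eq_subst_prefun (imat_tpow_rescale d_neq0 M t)).
apply: column_recursive_subst_prefun1.
- exact: (tpow_prefun0 hMd hcol t).
- exact: (column_recursive_tpow hMd hcol t).
Qed.
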